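(* Let $\mathcal{L}:\mathbb{R}^d\to\mathbb{R}$ be differentiable with $\nabla\mathcal{L}$ Lipschitz continuous with constant $L$. Run full-batch MoFO with $\beta_1<\sqrt{\beta_2}<1$, $\epsilon=0$ and learning rates $\eta_t=\eta/\sqrt t$ ($\eta>0$). Then for every iteration $t\ge1$ and every coordinate $i$, $$g_{i,t}\frac{\hat m_{i,t}}{\sqrt{\hat v_{i,t}}}\ge\sqrt{1-\beta_2}\left(|g_{i,t}|-\left[\frac{2\sqrt2\,\beta_1}{(1-\beta_1)^2}+\frac{4}{1-\beta_2}\right]\frac{LC\eta}{\sqrt t}\right),$$ where $C=\dfrac{\sqrt{d\cdot(\alpha\%)+B}}{\sqrt{1-\beta_2}\,(1-\beta_1/\sqrt{\beta_2})}$.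
   Context: The coordinates of $\mathbb{R}^d$ are partitioned into $B$ blocks of sizes $d_1,\dots,d_B$ with $\sum_kd_k=d$. Fix $\alpha\%\in(0,1]$. For $z\in\mathbb{R}^d$, $\texttt{FLT}_\alpha(z)\in\{0,1\}^d$ equals, in each block $k$, $1$ exactly on a set of $\lceil d_k\cdot\alpha\%\rceil$ indices with the largest absolute values of $z$ within that block (ties broken in favour of smaller indices), and $0$ elsewhere. Full-batch MoFO with $\beta_1,\beta_2\in(0,1)$, learning rates $\eta_t>0$, initial point $\theta_0$: $m_0=v_0=0$; for $t\ge1$, $g_t=\nabla\mathcal{L}(\theta_{t-1})$, $m_t=\beta_1m_{t-1}+(1-\beta_1)g_t$, $v_t=\beta_2v_{t-1}+(1-\beta_2)g_t\odot g_t$, $\hat m_t=m_t/(1-\beta_1^t)$, $\hat v_t=v_t/(1-\beta_2^t)$, $\theta_t=\theta_{t-1}-\eta_t(\hat m_t\odot\texttt{FLT}_\alpha(m_t))/\sqrt{\hat v_t}$ entrywise ($\epsilon=0$: no additive constant in the denominator; a quotient with $\hat v_{i,t}=0$, where necessarily $\hat m_{i,t}=0$, is taken as $0$). Subscript $i,t$ denotes the $i$-th coordinate at iteration $t$. *)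

From HB Require Import structures.
From mathcomp Require Import all_boot all_order all_algebra.
From mathcomp Require Import all_classical all_reals topology normedtype derive.
Set Implicit Arguments. Unset Strict Implicit. Unset Printing Implicit Defensive.
Import Order.TTheory GRing.Theory Num.Theory.
Import numFieldNormedType.Exports.
Local Open Scope ring_scope.

Section MoFO.
Variables (R : realType) (d B : nat) (blk : 'I_d -> 'I_B).

Definition norm2 (v : 'rV[R]_d) : R := Num.sqrt (\sum_(i < d) v ord0 i ^+ 2).

Definition gradient (f : 'rV[R]_d -> R) (x : 'rV[R]_d) : 'rV[R]_d :=
  \row_(i < d) ('d f x (delta_mx ord0 i : 'rV[R]_d)).

Definition block_size (i : 'I_d) : nat := #|[set j | blk j == blk i]|.

Definition beats (z : 'rV[R]_d) (j i : 'I_d) : bool :=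
  (`|z ord0 i| < `|z ord0 j|) || ((`|z ord0 j| == `|z ord0 i|) && (j < i)%N).

(* FLT_alpha(z): in each block k, 1 exactly on the ceil(d_k * alpha) top-ranked
   indices of that block (rank = number of block-mates preceding it). *)
Definition FLT (alpha : R) (z : 'rV[R]_d) : 'rV[R]_d :=
  \row_(i < d)
    (if (#|[set j | (blk j == blk i) && beats z j i]|%:Z
         < Num.ceil ((block_size i)%:R * alpha))%R then 1 else 0).

Fixpoint mofo_state (f : 'rV[R]_d -> R) (alpha beta1 beta2 : R)
    (eta : nat -> R) (theta0 : 'rV[R]_d) (t : nat)
    : 'rV[R]_d * 'rV[R]_d * 'rV[R]_d :=
  match t with
  | 0 => (theta0, 0, 0)
  | t'.+1 =>
    let: (theta, m, v) := mofo_state f alpha beta1 beta2 eta theta0 t' in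
    let g := gradient f theta in
    let m' := beta1 *: m + (1 - beta1) *: g in
    let v' := beta2 *: v + (1 - beta2) *: map2_mx (fun a b => a * b) g g in
    let mh := (1 - beta1 ^+ t'.+1)^-1 *: m' in
    let vh := (1 - beta2 ^+ t'.+1)^-1 *: v' in
    let flt := FLT alpha m' in
    let upd := \row_(i < d)
       (if vh ord0 i == 0 then 0
        else mh ord0 i * flt ord0 i / Num.sqrt (vh ord0 i)) in
    (theta - eta t'.+1 *: upd, m', v')
  end.

(* g_t = grad L(theta_{t-1}), m_t, v_t, hat m_t, hat v_t  for t >= 1 *)
Definition mofo_theta f alpha beta1 beta2 eta theta0 t :=
  (mofo_state f alpha beta1 beta2 eta theta0 t).1.1.
Definition mofo_g f alpha beta1 beta2 eta theta0 (t : nat) :=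
  gradient f (mofo_theta f alpha beta1 beta2 eta theta0 t.-1).
Definition mofo_m f alpha beta1 beta2 eta theta0 t :=
  (mofo_state f alpha beta1 beta2 eta theta0 t).1.2.
Definition mofo_v f alpha beta1 beta2 eta theta0 t :=
  (mofo_state f alpha beta1 beta2 eta theta0 t).2.
Definition mofo_mhat f alpha beta1 beta2 eta theta0 (t : nat) :=
  (1 - beta1 ^+ t)^-1 *: mofo_m f alpha beta1 beta2 eta theta0 t.
Definition mofo_vhat f alpha beta1 beta2 eta theta0 (t : nat) :=
  (1 - beta2 ^+ t)^-1 *: mofo_v f alpha beta1 beta2 eta theta0 t.

End MoFO.

From HB Require Import structures.
From mathcomp Require Import all_boot all_order all_algebra.
From mathcomp Require Import all_classical all_reals topology normedtype derive.
From mathcomp Require Import ring lra.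
Set Implicit Arguments. Unset Strict Implicit. Unset Printing Implicit Defensive.
Import Order.TTheory GRing.Theory Num.Theory.
Import numFieldNormedType.Exports.
Local Open Scope ring_scope.

(* Since [beta1 < sqrt beta2], the momentum stays below a fixed multiple of
   [sqrt v] coordinatewise, and [FLT] keeps at most [d alpha + B] coordinates,
   so every MoFO step moves [theta] by at most [eta_t (1 - beta1) C].  With
   [eta_t = eta / sqrt t] the iterates [theta_(s-1)] and [theta_(t-1)] are then
   [O ((t - s) / sqrt t)] apart, hence by the Lipschitz bound every past
   gradient [g_s] lies within [c (t - s)] of [g_t], for
   [c = 2 sqrt 2 (1 - beta1) L C eta / sqrt t].  Summing these lags in the two
   exponential averages gives [|mhat_t - g_t| <= c beta1 / (1 - beta1)] and
   [(1 - beta2) vhat_t <= (|g_t| + O (c))^2], while [vhat_t >= (1 - beta2) g_t^2];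
   an elementary two-case argument turns these three estimates into the lower
   bound on [g_t mhat_t / sqrt vhat_t]. *)

Section EuclideanNorm.
Variables (R : realType) (d : nat).
Implicit Types x y : 'rV[R]_d.

Lemma sum_sqr_ge0 x : 0 <= \sum_(i < d) x ord0 i ^+ 2.
Proof. by apply: sumr_ge0 => i _; apply: sqr_ge0. Qed.

Lemma norm2_ge0 x : 0 <= norm2 x.
Proof. exact: sqrtr_ge0. Qed.

Lemma sqr_norm2 x : norm2 x ^+ 2 = \sum_(i < d) x ord0 i ^+ 2.
Proof. by rewrite sqr_sqrtr // sum_sqr_ge0. Qed.

Lemma norm2_0 : norm2 (0 : 'rV[R]_d) = 0.
Proof. by rewrite /norm2 big1 ?sqrtr0 // => i _; rewrite mxE expr0n. Qed.

Lemma coord_le_norm2 x j : `|x ord0 j| <= norm2 x.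
Proof.
rewrite -sqrtr_sqr ler_sqrt ?sum_sqr_ge0 // (bigD1 j) //= lerDl.
by apply: sumr_ge0 => i _; apply: sqr_ge0.
Qed.

Lemma coordB_le_norm2 x y j : `|x ord0 j - y ord0 j| <= norm2 (x - y).
Proof.
by have := coord_le_norm2 (x - y) j; rewrite !mxE.
Qed.

Lemma norm2Z c x : norm2 (c *: x) = `|c| * norm2 x.
Proof.
rewrite -sqrtr_sqr -sqrtrM ?sqr_ge0 // mulr_sumr.
by congr Num.sqrt; apply: eq_bigr => i _; rewrite mxE exprMn.
Qed.

Lemma norm2_eq0_coord x : norm2 x = 0 -> forall i, x ord0 i = 0.
Proof.
by move=> x0 i; apply/normr0_eq0/le_anti; rewrite normr_ge0 -x0 coord_le_norm2.
Qed.

Lemma dot_le_norm2 x y : \sum_(i < d) x ord0 i * y ord0 i <= norm2 x * norm2 y.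
Proof.
have [x0|nx0] := eqVneq (norm2 x) 0.
  by rewrite x0 mul0r big1 // => i _; rewrite norm2_eq0_coord // mul0r.
have [y0|ny0] := eqVneq (norm2 y) 0.
  by rewrite y0 mulr0 big1 // => i _; rewrite (norm2_eq0_coord y0) mulr0.
set nx := norm2 x; set ny := norm2 y.
have nxy : 0 < nx * ny by rewrite mulr_gt0 // lt_def ?nx0 ?ny0 norm2_ge0.
(* sum [2 nx ny x_i y_i <= ny^2 x_i^2 + nx^2 y_i^2] over [i] *)
rewrite -(ler_pM2l nxy) -(ler_pM2l (ltr0Sn R 1)) mulr_sumr mulr_sumr.
have -> : 2 * (nx * ny * (nx * ny)) =
    \sum_(i < d) (ny ^+ 2 * x ord0 i ^+ 2 + nx ^+ 2 * y ord0 i ^+ 2).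
  by rewrite big_split -!mulr_sumr -!sqr_norm2 -/nx -/ny /=; ring.
apply: ler_sum => i _; have := sqr_ge0 (ny * x ord0 i - nx * y ord0 i).
rewrite !expr2; lra.
Qed.

Lemma norm2D x y : norm2 (x + y) <= norm2 x + norm2 y.
Proof.
rewrite -[leRHS]ger0_norm ?addr_ge0 ?norm2_ge0 // -sqrtr_sqr ler_sqrt ?sqr_ge0 //.
have -> : \sum_(i < d) (x + y) ord0 i ^+ 2 = \sum_(i < d) x ord0 i ^+ 2
    + \sum_(i < d) y ord0 i ^+ 2 + 2 * \sum_(i < d) x ord0 i * y ord0 i.
  by rewrite mulr_sumr -!big_split; apply: eq_bigr => i _ /=; rewrite mxE; ring.
by rewrite -!sqr_norm2; have := dot_le_norm2 x y; lra.
Qed.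

Lemma norm2_sub_triangle x y z : norm2 (x - z) <= norm2 (x - y) + norm2 (y - z).
Proof. by have := norm2D (x - y) (y - z); rewrite addrA subrK. Qed.

Lemma lipschitz_const_ge0 (F : 'rV[R]_d -> 'rV[R]_d) L (j : 'I_d) :
  (forall x y, norm2 (F x - F y) <= L * norm2 (x - y)) -> 0 <= L.
Proof.
move=> hF; have := le_trans (norm2_ge0 _) (hF (delta_mx ord0 j) 0); rewrite subr0.
have : 1 <= norm2 (delta_mx ord0 j : 'rV[R]_d).
  by have := coord_le_norm2 (delta_mx ord0 j) j; rewrite mxE !eqxx normr1.
by move=> e1; rewrite pmulr_lge0 // (lt_le_trans ltr01).
Qed.

End EuclideanNorm.

Lemma card_le_of_injective_bounded (T : finType) (S : {pred T}) (rk : T -> nat) n :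
  {in S &, injective rk} -> {in S, forall i, rk i < n}%N -> (#|S| <= n)%N.
Proof.
move=> rk_inj rk_lt; rewrite cardE -(size_map rk) -[n](size_iota 0).
apply: uniq_leq_size => [|x /mapP[i]].
  by rewrite map_inj_in_uniq ?enum_uniq // => i j; rewrite !mem_enum; apply: rk_inj.
by rewrite mem_enum => /rk_lt ? ->; rewrite mem_iota.
Qed.

Section FilterCount.
Variables (R : realType) (d B : nat) (blk : 'I_d -> 'I_B).
Implicit Types (z : 'rV[R]_d) (i j l : 'I_d).

Lemma beats_irrefl z i : ~~ beats z i i.
Proof. by rewrite /beats ltxx ltnn andbF. Qed.

Lemma beats_total z i j : i != j -> beats z i j || beats z j i.
Proof.
rewrite /beats; case: (ltgtP `|z ord0 j| `|z ord0 i|) => //= _.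
by case: (ltngtP i j) => // /val_inj ->; rewrite eqxx.
Qed.

Lemma beats_trans z i j l : beats z l j -> beats z j i -> beats z l i.
Proof.
rewrite /beats => /orP[h1|/andP[/eqP h1 h1']] /orP[h2|/andP[/eqP h2 h2']].
- by rewrite (lt_trans h2 h1).
- by rewrite -h2 h1.
- by rewrite h1 h2.
- by rewrite h1 h2 eqxx (ltn_trans h1' h2') orbT.
Qed.

(* [FLT] keeps exactly the coordinates whose [block_rank] is below
   [ceil (block_size i * alpha)]. *)
Definition block_rank z i := #|[set j | (blk j == blk i) && beats z j i]|.

Lemma block_rank_lt z i j :
  blk j = blk i -> beats z j i -> (block_rank z j < block_rank z i)%N.
Proof.
move=> bji ji; apply/proper_card/properP; split.
  apply/fintype.subsetP => l; rewrite !inE => /andP[/eqP -> lj].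
  by rewrite bji eqxx (beats_trans lj ji).
by exists j; rewrite !inE ?bji ?eqxx ?ji // (negbTE (beats_irrefl z j)) andbF.
Qed.

Lemma block_rank_inj z i j :
  blk i = blk j -> block_rank z i = block_rank z j -> i = j.
Proof.
move=> bij rij; apply/eqP/negPn/negP => /(beats_total z)/orP[] h.
  by have := block_rank_lt bij h; rewrite rij ltnn.
by have := block_rank_lt (esym bij) h; rewrite rij ltnn.
Qed.

Lemma FLT_01 alpha z i : FLT blk alpha z ord0 i = 0 \/ FLT blk alpha z ord0 i = 1.
Proof. by rewrite mxE; case: ifP; [right|left]. Qed.

Lemma FLT_ge0 alpha z i : 0 <= FLT blk alpha z ord0 i.
Proof. by case: (FLT_01 alpha z i) => ->. Qed.

Lemma sum_FLT_le alpha z : 0 <= alpha ->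
  \sum_(i < d) FLT blk alpha z ord0 i <= d%:R * alpha + B%:R.
Proof.
move=> alpha_ge0; rewrite (partition_big blk predT) //=.
pose n k := #|[set j | blk j == k]|.
have -> : d%:R * alpha + B%:R = \sum_(k < B) ((n k)%:R * alpha + 1) :> R.
  rewrite big_split /= -mulr_suml sumr_const card_ord -natr_sum; congr (_%:R * _ + _).
  rewrite -[in LHS](card_ord d) -sum1_card (partition_big blk predT) //=.
  by apply: eq_bigr => k _; rewrite /n -sum1_card; apply: eq_bigl => j; rewrite inE.
apply: ler_sum => k _; set c := Num.ceil ((n k)%:R * alpha).
have c_ge0 : (0 <= c)%R by rewrite ceil_ge0 (lt_le_trans (ltrN10 R)) ?mulr_ge0.
pose S := [pred i | (blk i == k) && ((block_rank z i)%:Z < c)%R].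
have -> : \sum_(i < d | blk i == k) FLT blk alpha z ord0 i = (#|S|)%:R.
  rewrite big_mkcond -sum1_card natr_sum [RHS]big_mkcond; apply: eq_bigr => i _.
  rewrite !inE mxE; case: eqP => [bi|] //=.
  by rewrite /block_size /block_rank bi; case: ifP.
have S_le : (#|S| <= `|c|%N)%N.
  apply: (@card_le_of_injective_bounded _ S (block_rank z)) => [i j|i].
    by rewrite !inE => /andP[/eqP bi _] /andP[/eqP bj _]; apply: block_rank_inj; rewrite bi bj.
  by rewrite inE -ltz_nat gez0_abs // => /andP[].
apply: (le_trans (y := (`|c|%N)%:R)); first by rewrite ler_nat.
have := ceilB1_lt ((n k)%:R * alpha); rewrite -/c natr_absz ger0_norm // rmorphB /=; lra.
Qed.

End FilterCount.

Section ScalarBounds.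
Variable R : realType.

Lemma mean_sqr_shift_le (b x P Q : R) : 0 <= b <= 1 -> 0 <= x -> 0 <= P -> 0 <= Q ->
  b * (x + P) ^+ 2 + (1 - b) * (x + Q) ^+ 2
    <= (x + Num.sqrt (b * P ^+ 2 + (1 - b) * Q ^+ 2)) ^+ 2.
Proof.
move=> /andP[b_ge0 b_le1] x_ge0 P_ge0 Q_ge0.
have S_ge0 : 0 <= b * P ^+ 2 + (1 - b) * Q ^+ 2.
  by rewrite addr_ge0 // mulr_ge0 ?sqr_ge0 // subr_ge0.
set S := Num.sqrt _; have S2 : S ^+ 2 = b * P ^+ 2 + (1 - b) * Q ^+ 2 by rewrite sqr_sqrtr.
have mean_le : b * P + (1 - b) * Q <= S.
  rewrite -(@ler_pXn2r _ 2) ?nnegrE ?sqrtr_ge0 ?S2 //; last first.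
    by apply: addr_ge0; apply: mulr_ge0; lra.
  have : 0 <= b * (1 - b) * (P - Q) ^+ 2.
    by apply: mulr_ge0; [apply: mulr_ge0; lra | exact: sqr_ge0].
  by rewrite !expr2; lra.
have := ler_wpM2l x_ge0 mean_le; move: S2; rewrite !expr2; lra.
Qed.

Lemma inv_sqrtS_le n :
  (Num.sqrt (n.+1%:R))^-1 <= 2 * (Num.sqrt (n.+1%:R) - Num.sqrt (n%:R)) :> R.
Proof.
set a := Num.sqrt _; set b := Num.sqrt _.
have a_gt0 : 0 < a by rewrite sqrtr_gt0 ltr0n.
have a2 : a ^+ 2 = b ^+ 2 + 1 by rewrite !sqr_sqrtr // -natr1.
rewrite -[leLHS]mul1r ler_pdivrMr // -subr_ge0.
by have := sqr_ge0 (a - b); move: a2; rewrite !expr2; nra.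
Qed.

Lemma sqrtB_nat_le (x y : nat) : (y <= x)%N ->
  Num.sqrt (x%:R) - Num.sqrt (y%:R) <= Num.sqrt 2 * (x - y)%:R / Num.sqrt (x.+1%:R) :> R.
Proof.
move=> yx; set sx := Num.sqrt (x%:R); set sy := Num.sqrt (y%:R).
have sxy : sy <= sx by rewrite ler_sqrt // ler_nat.
have sy_ge0 : 0 <= sy := sqrtr_ge0 _.
rewrite ler_pdivlMr ?sqrtr_gt0 ?ltr0n // natrB //.
have [x0|x_gt0] := posnP x.
  by move: yx; rewrite x0 leqn0 => /eqP y0; rewrite /sx /sy x0 y0 !subrr mul0r mulr0.
have hs : Num.sqrt (x.+1%:R) <= Num.sqrt 2 * sx :> R.
  rewrite /sx -sqrtrM // ler_sqrt ?mulr_ge0 // -natr1.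
  have : 1 <= x%:R :> R by rewrite ler1n.
  lra.
have h1 : (sx - sy) * sx <= x%:R - y%:R.
  rewrite -[x%:R]sqr_sqrtr // -[y%:R]sqr_sqrtr // -/sx -/sy; nra.
have := ler_wpM2l (sqrtr_ge0 2) h1; have := ler_wpM2l (_ : 0 <= sx - sy) hs; nra.
Qed.

Lemma debiased_ratio_sqr_le (p1 p2 M V K : R) : 0 < p1 -> 0 < p2 <= 1 -> 0 <= V ->
  `|M| <= p1 * K * Num.sqrt V -> p2^-1 * V != 0 ->
  (p1^-1 * M / Num.sqrt (p2^-1 * V)) ^+ 2 <= K ^+ 2.
Proof.
move=> p1_gt0 /andP[p2_gt0 p2_le1] V_ge0 hM V_neq0.
have pV_gt0 : 0 < p2^-1 * V by rewrite lt_def V_neq0 mulr_ge0 // invr_ge0 ltW.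
rewrite expr_div_n sqr_sqrtr ?(ltW pV_gt0) // ler_pdivrMr //.
have hM' : `|p1^-1 * M| <= K * Num.sqrt V.
  by rewrite normrM ger0_norm ?invr_ge0 ?(ltW p1_gt0) // ler_pdivrMl // mulrA.
have KV_ge0 : 0 <= K * Num.sqrt V := le_trans (normr_ge0 _) hM'.
apply: (@le_trans _ _ (K ^+ 2 * V)).
  by rewrite -real_normK ?num_real // -(sqr_sqrtr V_ge0) -exprMn ler_pXn2r ?nnegrE.
by rewrite ler_wpM2l ?sqr_ge0 // ler_peMl // invf_ge1.
Qed.

Lemma alignment_lower_bound (b a mh vh M Q E : R) : 0 < b <= 1 -> 0 <= Q ->
  `|mh - a| <= M -> b * a ^+ 2 <= vh -> b * vh <= (`|a| + Q) ^+ 2 ->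
  M + Q <= E -> M <= b * E ->
  Num.sqrt b * (`|a| - E) <= (if vh == 0 then 0 else a * (mh / Num.sqrt vh)).
Proof.
move=> /andP[b_gt0 b_le1] Q_ge0 hmh hlo hhi hMQ hbE.
have M_ge0 : 0 <= M := le_trans (normr_ge0 _) hmh.
have a2 : a ^+ 2 = `|a| ^+ 2 by rewrite real_normK ?num_real.
have a_ge0 := normr_ge0 a.
have amh : `|a| * (`|a| - M) <= a * mh.
  have := lerNnormlW (lexx `|a * (mh - a)|); have := ler_wpM2l a_ge0 hmh.
  by rewrite normrM; move: a2; rewrite !expr2; lra.
case: eqP => [vh0|/eqP vh_neq0].
  have : `|a| ^+ 2 <= 0 by move: hlo; rewrite vh0 a2 pmulr_rle0.
  rewrite expr2 => a0; have aE : `|a| <= E by nra.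
  by rewrite mulr_ge0_le0 ?sqrtr_ge0 // subr_le0.
have vh_gt0 : 0 < vh.
  by rewrite lt_def vh_neq0 (le_trans _ hlo) // mulr_ge0 ?sqr_ge0 // ltW.
rewrite mulrA ler_pdivlMr ?sqrtr_gt0 //.
set s := Num.sqrt vh; set r := Num.sqrt b.
have s_ge0 : 0 <= s := sqrtr_ge0 _; have r_ge0 : 0 <= r := sqrtr_ge0 _.
(* [sqrt (b vh)] lies between [b |a|] and [|a| + Q], and [a mh >= |a| (|a| - M)]:
   the upper end settles the case [E <= |a|], the lower end the case [|a| < E]. *)
have u_hi : r * s <= `|a| + Q.
  rewrite -(@ler_pXn2r _ 2) ?nnegrE ?mulr_ge0 ?addr_ge0 //.
  by rewrite exprMn !sqr_sqrtr ?(ltW b_gt0) ?(ltW vh_gt0).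
have u_lo : b * `|a| <= r * s.
  rewrite -(@ler_pXn2r _ 2) ?nnegrE ?mulr_ge0 ?(ltW b_gt0) //.
  rewrite !exprMn !sqr_sqrtr ?(ltW b_gt0) ?(ltW vh_gt0) // -a2 expr2 -mulrA.
  by rewrite ler_wpM2l ?(ltW b_gt0).
rewrite mulrAC; apply: le_trans amh.
have [Ea|aE] := lerP E `|a|.
  have := ler_wpM2l (_ : 0 <= `|a| - E) u_hi; rewrite subr_ge0 => /(_ Ea).
  have : 0 <= (E - M - Q) * `|a| + E * Q.
    by rewrite addr_ge0 ?mulr_ge0 // ?subr_ge0 -?addrA ?lerBrDl //; lra.
  lra.
have := ler_wnM2l (_ : `|a| - E <= 0) u_lo; rewrite subr_le0 => /(_ (ltW aE)).
have : 0 <= `|a| * ((1 - b) * `|a| + (b * E - M)).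
  by rewrite mulr_ge0 // addr_ge0 ?mulr_ge0 // subr_ge0.
lra.
Qed.

Lemma error_constants_le (b1 b2 X : R) : 0 < b1 < 1 -> 0 < b2 < 1 -> 0 <= X ->
  let c := 2 * Num.sqrt 2 * (1 - b1) * X in
  let E := (2 * Num.sqrt 2 * b1 / (1 - b1) ^+ 2 + 4 / (1 - b2)) * X in
  c * (b1 / (1 - b1)) + c * Num.sqrt (b2 * (1 + b2) / (1 - b2) ^+ 2) <= E /\
  c * (b1 / (1 - b1)) <= (1 - b2) * E.
Proof.
move=> /andP[b1_gt0 b1_lt1] /andP[b2_gt0 b2_lt1] X_ge0 c E.
have b1c_gt0 : 0 < 1 - b1 by rewrite subr_gt0.
have b2c_gt0 : 0 < 1 - b2 by rewrite subr_gt0.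
have s2_ge0 : 0 <= Num.sqrt 2 :> R := sqrtr_ge0 _.
have s22 : Num.sqrt 2 * Num.sqrt 2 = 2 :> R by rewrite -expr2 sqr_sqrtr.
have MX : c * (b1 / (1 - b1)) = 2 * Num.sqrt 2 * b1 * X.
  by rewrite /c; field; rewrite gt_eqF.
have M_le_c1 : 2 * Num.sqrt 2 * b1 * X <= 2 * Num.sqrt 2 * b1 / (1 - b1) ^+ 2 * X.
  rewrite ler_wpM2r // ler_pdivlMr ?exprn_gt0 // ler_piMr ?mulr_ge0 ?(ltW b1_gt0) //.
  by rewrite expr_le1 //; lra.
have M_le4 : 2 * Num.sqrt 2 * b1 * X <= 4 * X by rewrite ler_wpM2r //; nra.
have sD : Num.sqrt (b2 * (1 + b2) / (1 - b2) ^+ 2) <= Num.sqrt 2 / (1 - b2).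
  have -> : Num.sqrt 2 / (1 - b2) = Num.sqrt (2 / (1 - b2) ^+ 2).
    by rewrite sqrtrM // sqrtrV ?sqr_ge0 // sqrtr_sqr ger0_norm // ltW.
  rewrite ler_sqrt ?divr_ge0 ?sqr_ge0 // ler_pM2r ?invr_gt0 ?exprn_gt0 //; nra.
have Q_le : c * Num.sqrt (b2 * (1 + b2) / (1 - b2) ^+ 2) <= 4 * X / (1 - b2).
  apply: (le_trans (ler_wpM2l _ sD)); first by rewrite !mulr_ge0 // ltW.
  have -> : c * (Num.sqrt 2 / (1 - b2)) = (1 - b1) * (4 * X / (1 - b2)).
    have -> : 4 = 2 * (Num.sqrt 2 * Num.sqrt 2) :> R by rewrite s22; lra.
    by rewrite /c; field; rewrite gt_eqF.
  by rewrite ler_piMl ?divr_ge0 ?mulr_ge0 //; lra.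
have -> : E = 2 * Num.sqrt 2 * b1 / (1 - b1) ^+ 2 * X + 4 * X / (1 - b2).
  by rewrite /E; ring.
have c1_ge0 : 0 <= (1 - b2) * (2 * Num.sqrt 2 * b1 / (1 - b1) ^+ 2 * X).
  by rewrite !mulr_ge0 ?invr_ge0 ?exprn_ge0 // ltW.
have b2E : (1 - b2) * (4 * X / (1 - b2)) = 4 * X by field; rewrite gt_eqF.
rewrite MX; split; first lra.
by rewrite mulrDr b2E; lra.
Qed.

End ScalarBounds.

Definition ratio_bound (R : realType) (b1 b2 : R) :=
  (1 - b1) / (Num.sqrt (1 - b2) * (1 - b1 / Num.sqrt b2)).

Section MomentumRatio.
Variables (R : realType) (b1 b2 : R).
Hypotheses (hb1 : 0 < b1 < 1) (hb2 : 0 < b2 < 1) (hq : b1 < Num.sqrt b2).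

Lemma ratio_den_gt0 : 0 < Num.sqrt (1 - b2) * (1 - b1 / Num.sqrt b2).
Proof.
have [b2_gt0 b2_lt1] := andP hb2.
have s2_gt0 : 0 < Num.sqrt b2 by rewrite sqrtr_gt0.
by rewrite mulr_gt0 ?sqrtr_gt0 ?subr_gt0 // ltr_pdivrMr ?mul1r.
Qed.

Lemma ratio_bound_gt0 : 0 < ratio_bound b1 b2.
Proof. by rewrite divr_gt0 ?ratio_den_gt0 // subr_gt0; case/andP: hb1. Qed.

Lemma ema_ratio_step (p M V G : R) : 0 <= p <= 1 -> 0 <= V ->
  `|M| <= (1 - p) * ratio_bound b1 b2 * Num.sqrt V ->
  `|b1 * M + (1 - b1) * G|
    <= (1 - b1 * p) * ratio_bound b1 b2 * Num.sqrt (b2 * V + (1 - b2) * G ^+ 2).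
Proof.
move=> /andP[p_ge0 p_le1] V_ge0 hM.
have [b1_gt0 b1_lt1] := andP hb1; have [b2_gt0 b2_lt1] := andP hb2.
have K_gt0 := ratio_bound_gt0; move: hM K_gt0; rewrite /ratio_bound.
set s1 := Num.sqrt (1 - b2); set s2 := Num.sqrt b2; set S := Num.sqrt (b2 * V + _).
set q := b1 / s2; set K := _ / _ => hM K_gt0.
have s2_gt0 : 0 < s2 by rewrite sqrtr_gt0.
have s1_gt0 : 0 < s1 by rewrite sqrtr_gt0 subr_gt0.
have s2_le1 : s2 <= 1 by rewrite -sqrtr1 ler_sqrt //; lra.
have b1E : b1 = q * s2 by rewrite mulrVK // unitfE gt_eqF.
have q_lt1 : q < 1 by rewrite ltr_pdivrMr // mul1r.
have b1_le_q : b1 <= q by rewrite ler_pdivlMr //; nra.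
have b1cE : 1 - b1 = K * (1 - q) * s1.
  by rewrite /K; field; rewrite !gt_eqF // subr_gt0.
have hS : 0 <= b2 * V /\ 0 <= (1 - b2) * G ^+ 2.
  by split; apply: mulr_ge0; rewrite ?sqr_ge0 //; lra.
have hS1 : s2 * Num.sqrt V <= S.
  by rewrite -sqrtrM ?ler_sqrt ?lerDl; [case: hS| case: hS => *; lra| lra].
have hS2 : s1 * `|G| <= S.
  by rewrite -sqrtr_sqr -sqrtrM ?ler_sqrt ?lerDr; [case: hS| case: hS => *; lra| lra].
(* the old moment contributes [q (1 - p) K S], the new gradient [(1 - q) K S] *)
have e1 : b1 * `|M| <= q * (1 - p) * K * S.
  have qpK_ge0 : 0 <= q * (1 - p) * K by apply: mulr_ge0; [apply: mulr_ge0|]; lra.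
  have := ler_wpM2l (ltW b1_gt0) hM; have := ler_wpM2l qpK_ge0 hS1.
  have -> : b1 * ((1 - p) * K * Num.sqrt V) = q * (1 - p) * K * (s2 * Num.sqrt V).
    by rewrite b1E; ring.
  lra.
have e2 : (1 - b1) * `|G| <= K * (1 - q) * S.
  have Kq_ge0 : 0 <= K * (1 - q) by apply: mulr_ge0; lra.
  by have := ler_wpM2l Kq_ge0 hS2; rewrite mulrA -b1cE.
have e3 : (q * (1 - p) + (1 - q)) * K * S <= (1 - b1 * p) * K * S.
  apply: ler_wpM2r; first exact: sqrtr_ge0.
  by apply: ler_wpM2r; [lra | nra].
apply: (le_trans (ler_normD _ _)).
have b1c_ge0 : 0 <= 1 - b1 by lra.
by rewrite !normrM (ger0_norm (ltW b1_gt0)) (ger0_norm b1c_ge0); lra.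
Qed.

End MomentumRatio.

Section ExponentialMovingAverage.
Variables (R : realType) (b1 b2 : R) (g m v : nat -> R).
Hypotheses (hb1 : 0 < b1 < 1) (hb2 : 0 < b2 < 1).
Hypotheses (m0 : m 0 = 0) (v0 : v 0 = 0).
Hypothesis mS : forall s, m s.+1 = b1 * m s + (1 - b1) * g s.+1.
Hypothesis vS : forall s, v s.+1 = b2 * v s + (1 - b2) * g s.+1 ^+ 2.

Lemma ema_sqr_ge0 s : 0 <= v s.
Proof.
have [b2_gt0 b2_lt1] := andP hb2.
elim: s => [|s IH]; first by rewrite v0.
by rewrite vS; apply: addr_ge0; apply: mulr_ge0; rewrite ?sqr_ge0 //; lra.
Qed.

Lemma ema_sqr_ge s : (1 - b2) * g s.+1 ^+ 2 <= v s.+1.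
Proof.
have [b2_gt0 _] := andP hb2.
by rewrite vS lerDr mulr_ge0 ?ema_sqr_ge0 // ltW.
Qed.

Lemma ema_le_ratio_bound : b1 < Num.sqrt b2 -> forall s,
  `|m s| <= (1 - b1 ^+ s) * ratio_bound b1 b2 * Num.sqrt (v s).
Proof.
have [b1_gt0 b1_lt1] := andP hb1.
move=> hq; elim=> [|s IH]; first by rewrite m0 v0 normr0 expr0 subrr !mul0r.
rewrite mS vS exprS; apply: ema_ratio_step; rewrite ?ema_sqr_ge0 //.
by rewrite exprn_ge0 ?exprn_ile1 // ltW.
Qed.

Lemma ema_debiased_sqr_ge t : (0 < t)%N ->
  (1 - b2) * g t ^+ 2 <= (1 - b2 ^+ t)^-1 * v t.
Proof.
have [b2_gt0 b2_lt1] := andP hb2.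
case: t => // t _; apply: (le_trans (ema_sqr_ge t)).
rewrite ler_peMl ?ema_sqr_ge0 // invf_ge1 ?subr_gt0 ?exprn_ilt1 ?lerBlDr ?lerDl ?exprn_ge0 //;
  exact: ltW.
Qed.

Variables (t : nat) (a c : R).
Hypothesis c_ge0 : 0 <= c.
Hypothesis g_near : forall s, (0 < s <= t)%N -> `|g s - a| <= c * (t - s)%:R.

Lemma ema_dev s : (s <= t)%N ->
  `|m s - (1 - b1 ^+ s) * a| <= c * (1 - b1 ^+ s) * ((t - s)%:R + b1 / (1 - b1)).
Proof.
have [b1_gt0 b1_lt1] := andP hb1.
elim: s => [|s IH] st; first by rewrite m0 expr0 subrr !mul0r subrr normr0 mulr0 mul0r.
have := IH (ltnW st); have := g_near (s := s.+1) st.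
rewrite -(subnSK st) -natr1 mS exprS; set T := (t - s.+1)%:R; set P := b1 ^+ s.
have P_ge0 : 0 <= P by rewrite exprn_ge0 // ltW.
have T_ge0 : 0 <= T by [].
set w := b1 / (1 - b1) => hg hm.
have w_ge0 : 0 <= w by apply: divr_ge0; lra.
have -> : b1 * m s + (1 - b1) * g s.+1 - (1 - b1 * P) * a =
    b1 * (m s - (1 - P) * a) + (1 - b1) * (g s.+1 - a) by ring.
apply: (le_trans (ler_normD _ _)).
have b1c_ge0 : 0 <= 1 - b1 by lra.
rewrite !normrM (ger0_norm (ltW b1_gt0)) (ger0_norm b1c_ge0).
have := ler_wpM2l (ltW b1_gt0) hm; have := ler_wpM2l b1c_ge0 hg.
(* [b1 (1 + w) = w], which absorbs the lag [t - s] of the older gradients *)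
have -> : c * (1 - b1 * P) * (T + w) = b1 * (c * (1 - P) * (T + 1 + w))
    + (1 - b1) * (c * T) + c * (w * P * (1 - b1)).
  by rewrite /w; field; rewrite gt_eqF // subr_gt0.
have : 0 <= c * (w * P * (1 - b1)).
  by apply: mulr_ge0 => //; apply: mulr_ge0; [apply: mulr_ge0 | lra].
lra.
Qed.

Lemma ema_sqr_dev :
  v t <= (`|a| + c * Num.sqrt (b2 * (1 + b2) / (1 - b2) ^+ 2)) ^+ 2.
Proof.
have [b2_gt0 b2_lt1] := andP hb2.
pose A := 2 * b2 / (1 - b2); pose D := b2 * (1 + b2) / (1 - b2) ^+ 2.
pose h (n : R) := n ^+ 2 + A * n + D.
have A_ge0 : 0 <= A by apply: divr_ge0; lra.
have D_ge0 : 0 <= D by apply: divr_ge0; [apply: mulr_ge0 | apply: sqr_ge0]; lra.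
have h_ge0 n : 0 <= n -> 0 <= h n.
  by move=> n_ge0; apply: addr_ge0 => //; apply: addr_ge0; [apply: sqr_ge0 | apply: mulr_ge0].
(* [h] is chosen so that one step of the recursion of [v] preserves the bound
   [v s <= (|a| + c sqrt (h (t - s)))^2]. *)
have hE n : b2 * h (n + 1) + (1 - b2) * n ^+ 2 = h n.
  by rewrite /h /A /D; field; rewrite gt_eqF // subr_gt0.
suff /(_ t (leqnn t)) : forall s, (s <= t)%N ->
    v s <= (`|a| + c * Num.sqrt (h (t - s)%:R)) ^+ 2.
  by rewrite subnn /h expr0n mulr0 !add0r.
elim=> [|s IH] st; first by rewrite v0 sqr_ge0.
have := IH (ltnW st); have := g_near (s := s.+1) st.
rewrite -(subnSK st) -natr1 vS; set T := (t - s.+1)%:R => hg hv.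
have T_ge0 : 0 <= T by [].
have hg2 : g s.+1 ^+ 2 <= (`|a| + c * T) ^+ 2.
  rewrite -real_normK ?num_real // ler_pXn2r ?nnegrE ?addr_ge0 ?mulr_ge0 //.
  by have := ler_normD (g s.+1 - a) a; rewrite subrK; lra.
apply: (le_trans (lerD (ler_wpM2l (ltW b2_gt0) hv) (ler_wpM2l (_ : 0 <= 1 - b2) hg2))).
  by lra.
apply: (le_trans (mean_sqr_shift_le _ _ _ _)); rewrite ?mulr_ge0 ?sqrtr_ge0 //; try lra.
rewrite !exprMn sqr_sqrtr -1?(hE T); last by apply: h_ge0; lra.
have -> : b2 * (c ^+ 2 * h (T + 1)) + (1 - b2) * (c ^+ 2 * T ^+ 2)
    = c ^+ 2 * (b2 * h (T + 1) + (1 - b2) * T ^+ 2) by ring.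
by rewrite sqrtrM ?sqr_ge0 // sqrtr_sqr (ger0_norm c_ge0).
Qed.

Lemma ema_debiased_dev : (0 < t)%N ->
  `|(1 - b1 ^+ t)^-1 * m t - a| <= c * (b1 / (1 - b1)).
Proof.
have [b1_gt0 b1_lt1] := andP hb1.
move=> t_gt0; have := ema_dev (leqnn t); rewrite subnn add0r.
have p_gt0 : 0 < 1 - b1 ^+ t by rewrite subr_gt0 exprn_ilt1 // ?ltW // -lt0n.
have -> : (1 - b1 ^+ t)^-1 * m t - a = (1 - b1 ^+ t)^-1 * (m t - (1 - b1 ^+ t) * a).
  by field; rewrite gt_eqF.
have pinv_ge0 : 0 <= (1 - b1 ^+ t)^-1 by rewrite invr_ge0 ltW.
by rewrite normrM (ger0_norm pinv_ge0) ler_pdivrMl //; lra.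
Qed.

Lemma ema_debiased_sqr_dev : (0 < t)%N ->
  (1 - b2) * ((1 - b2 ^+ t)^-1 * v t)
    <= (`|a| + c * Num.sqrt (b2 * (1 + b2) / (1 - b2) ^+ 2)) ^+ 2.
Proof.
have [b2_gt0 b2_lt1] := andP hb2.
move=> t_gt0; apply: le_trans ema_sqr_dev.
have p_gt0 : 0 < 1 - b2 ^+ t by rewrite subr_gt0 exprn_ilt1 // ?ltW // -lt0n.
have b2_le : 1 - b2 <= 1 - b2 ^+ t.
  by rewrite lerD2l lerN2 -[leRHS]expr1 ler_wiXn2l // ?ltW.
by rewrite mulrA ler_piMl ?ema_sqr_ge0 // ler_pdivrMr // mul1r.
Qed.

End ExponentialMovingAverage.

Section SqrtScheduleDistance.
Variables (R : realType) (d : nat) (theta : nat -> 'rV[R]_d) (eta W : R).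
Hypotheses (eta_ge0 : 0 <= eta) (W_ge0 : 0 <= W).
Hypothesis step_le :
  forall r, norm2 (theta r - theta r.+1) <= eta / Num.sqrt (r.+1%:R) * W.

Lemma sqrt_schedule_dist s k : norm2 (theta s - theta (s + k))
  <= 2 * eta * W * (Num.sqrt ((s + k)%:R) - Num.sqrt (s%:R)).
Proof.
elim: k => [|k IH]; first by rewrite addn0 !subrr norm2_0 mulr0.
apply: (le_trans (norm2_sub_triangle _ (theta (s + k)) _)); rewrite addnS.
have := ler_wpM2l (mulr_ge0 eta_ge0 W_ge0) (inv_sqrtS_le R (s + k)).
by have := step_le (s + k); rewrite mulrAC; lra.
Qed.

Lemma sqrt_schedule_dist_le s u : (s <= u)%N ->
  norm2 (theta s - theta u) <= 2 * Num.sqrt 2 * eta * W * (u - s)%:R / Num.sqrt (u.+1%:R).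
Proof.
move=> su; have := sqrt_schedule_dist s (u - s); rewrite subnKC // => /le_trans->//.
have -> : 2 * Num.sqrt 2 * eta * W * (u - s)%:R / Num.sqrt (u.+1%:R)
    = 2 * eta * W * (Num.sqrt 2 * (u - s)%:R / Num.sqrt (u.+1%:R)) by ring.
by rewrite ler_wpM2l ?sqrtB_nat_le // !mulr_ge0.
Qed.

End SqrtScheduleDistance.

Section MoFO.
Variables (R : realType) (d B : nat) (blk : 'I_d -> 'I_B) (f : 'rV[R]_d -> R).
Variables (alpha b1 b2 : R) (eta : nat -> R) (theta0 : 'rV[R]_d).

Local Notation theta := (mofo_theta blk f alpha b1 b2 eta theta0).
Local Notation g := (mofo_g blk f alpha b1 b2 eta theta0).
Local Notation m := (mofo_m blk f alpha b1 b2 eta theta0).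
Local Notation v := (mofo_v blk f alpha b1 b2 eta theta0).
Local Notation mh := (mofo_mhat blk f alpha b1 b2 eta theta0).
Local Notation vh := (mofo_vhat blk f alpha b1 b2 eta theta0).

Definition mofo_update t : 'rV[R]_d := \row_(i < d)
  (if vh t ord0 i == 0 then 0
   else mh t ord0 i * FLT blk alpha (m t) ord0 i / Num.sqrt (vh t ord0 i)).

Lemma mofo_mS t i : m t.+1 ord0 i = b1 * m t ord0 i + (1 - b1) * g t.+1 ord0 i.
Proof.
rewrite /mofo_m /mofo_g /mofo_theta /=.
by case: (mofo_state _ _ _ _ _ _ _ t) => [[? ?] ?]; rewrite !mxE.
Qed.

Lemma mofo_vS t i : v t.+1 ord0 i = b2 * v t ord0 i + (1 - b2) * g t.+1 ord0 i ^+ 2.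
Proof.
rewrite /mofo_v /mofo_g /mofo_theta /=.
by case: (mofo_state _ _ _ _ _ _ _ t) => [[? ?] ?]; rewrite !mxE expr2.
Qed.

Lemma mofo_thetaS t : theta t.+1 = theta t - eta t.+1 *: mofo_update t.+1.
Proof.
rewrite /mofo_update /mofo_vhat /mofo_mhat /mofo_v /mofo_m /mofo_theta /=.
by case: (mofo_state _ _ _ _ _ _ _ t) => [[? ?] ?].
Qed.

Hypotheses (hb1 : 0 < b1 < 1) (hb2 : 0 < b2 < 1) (hq : b1 < Num.sqrt b2).

Lemma mofo_v_ge0 t i : 0 <= v t ord0 i.
Proof.
apply: (@ema_sqr_ge0 R b2 (fun s => g s ord0 i) (fun s => v s ord0 i) hb2 _ (mofo_vS^~ i)).
by rewrite mxE.
Qed.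

Lemma mofo_vhat_ge t i : (0 < t)%N -> (1 - b2) * g t ord0 i ^+ 2 <= vh t ord0 i.
Proof.
move=> t_gt0; rewrite [vh t ord0 i]mxE.
apply: (@ema_debiased_sqr_ge R b2 (fun s => g s ord0 i) (fun s => v s ord0 i) hb2 _
  (mofo_vS^~ i)) => //.
by rewrite mxE.
Qed.

Lemma mofo_update_sqr_le t i :
  mofo_update t ord0 i ^+ 2 <= ratio_bound b1 b2 ^+ 2 * FLT blk alpha (m t) ord0 i.
Proof.
have [b1_gt0 b1_lt1] := andP hb1; have [b2_gt0 b2_lt1] := andP hb2.
rewrite mxE; case: eqP => [_|vh_neq0]; first by rewrite expr0n mulr_ge0 ?sqr_ge0 ?FLT_ge0.
case: (FLT_01 blk alpha (m t) i) => ->; first by rewrite mulr0 mul0r expr0n /= mulr0.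
case: t vh_neq0 => [|t] vh_neq0.
  by exfalso; apply: vh_neq0; rewrite /mofo_vhat !mxE mulr0.
rewrite !mulr1 /mofo_mhat /mofo_vhat !mxE; apply: debiased_ratio_sqr_le.
- by rewrite subr_gt0 exprn_ilt1 // ltW.
- by rewrite subr_gt0 exprn_ilt1 ?lerBlDr ?lerDl ?exprn_ge0 // ltW.
- exact: mofo_v_ge0.
- by apply: (@ema_le_ratio_bound R b1 b2 (fun s => g s ord0 i) (fun s => m s ord0 i)
    (fun s => v s ord0 i) hb1 hb2 _ _ (mofo_mS^~ i) (mofo_vS^~ i)); rewrite ?mxE.
- by apply/eqP; move: vh_neq0; rewrite /mofo_vhat mxE.
Qed.

Hypothesis alpha_ge0 : 0 <= alpha.

Lemma norm2_mofo_update_le t :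
  norm2 (mofo_update t) <= ratio_bound b1 b2 * Num.sqrt (d%:R * alpha + B%:R).
Proof.
have K_ge0 := ltW (ratio_bound_gt0 hb1 hb2 hq).
rewrite -(ger0_norm K_ge0) -sqrtr_sqr -sqrtrM ?sqr_ge0 // ler_sqrt; last first.
  by rewrite mulr_ge0 ?sqr_ge0 // addr_ge0 // mulr_ge0.
apply: (le_trans (ler_sum _ (fun i _ => mofo_update_sqr_le t i))).
by rewrite -mulr_sumr ler_wpM2l ?sqr_ge0 ?sum_FLT_le.
Qed.

Lemma mofo_theta_step_le t : norm2 (theta t - theta t.+1)
  <= `|eta t.+1| * (ratio_bound b1 b2 * Num.sqrt (d%:R * alpha + B%:R)).
Proof.
by rewrite mofo_thetaS opprB addrC subrK norm2Z ler_wpM2l ?norm2_mofo_update_le.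
Qed.

End MoFO.

Section MoFOSqrtSchedule.
Variables (R : realType) (d B : nat) (blk : 'I_d -> 'I_B) (f : 'rV[R]_d -> R).
Variables (Lc alpha b1 b2 eta : R) (theta0 : 'rV[R]_d).
Hypotheses (hb1 : 0 < b1 < 1) (hb2 : 0 < b2 < 1) (hq : b1 < Num.sqrt b2).
Hypotheses (alpha_ge0 : 0 <= alpha) (eta_ge0 : 0 <= eta) (L_ge0 : 0 <= Lc).
Hypothesis hL :
  forall x y, norm2 (gradient f x - gradient f y) <= Lc * norm2 (x - y).

Local Notation etas := (fun t : nat => eta / Num.sqrt (t%:R)).
Local Notation theta := (mofo_theta blk f alpha b1 b2 etas theta0).
Local Notation g := (mofo_g blk f alpha b1 b2 etas theta0).
Local Notation m := (mofo_m blk f alpha b1 b2 etas theta0).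
Local Notation v := (mofo_v blk f alpha b1 b2 etas theta0).
Local Notation mh := (mofo_mhat blk f alpha b1 b2 etas theta0).
Local Notation vh := (mofo_vhat blk f alpha b1 b2 etas theta0).
Local Notation C := (Num.sqrt (d%:R * alpha + B%:R)
                     / (Num.sqrt (1 - b2) * (1 - b1 / Num.sqrt b2))).

Variables (t : nat) (i : 'I_d).
Local Notation c := (2 * Num.sqrt 2 * (1 - b1) * (Lc * C * eta / Num.sqrt (t%:R))).

Lemma mofo_scale_ge0 : 0 <= Lc * C * eta / Num.sqrt (t%:R).
Proof.
by rewrite !mulr_ge0 ?invr_ge0 ?sqrtr_ge0 // ltW // ratio_den_gt0.
Qed.

Lemma mofo_drift_ge0 : 0 <= c.
Proof.
have [_ b1_lt1] := andP hb1.
apply: mulr_ge0 mofo_scale_ge0; apply: mulr_ge0; last lra.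
by rewrite mulr_ge0 ?sqrtr_ge0.
Qed.

Lemma mofo_g_drift s : (0 < s <= t)%N -> `|g s ord0 i - g t ord0 i| <= c * (t - s)%:R.
Proof.
case: s => // s /andP[_ st]; have t_gt0 := leq_ltn_trans (leq0n s) st.
set W := ratio_bound b1 b2 * Num.sqrt (d%:R * alpha + B%:R).
have W_ge0 : 0 <= W by rewrite mulr_ge0 ?sqrtr_ge0 // ltW // ratio_bound_gt0.
have step r : norm2 (theta r - theta r.+1) <= eta / Num.sqrt (r.+1%:R) * W.
  rewrite (le_trans (mofo_theta_step_le blk f etas theta0 hb1 hb2 hq alpha_ge0 r)) //.
  by rewrite ger0_norm // divr_ge0 ?sqrtr_ge0.
have st' : (s <= t.-1)%N by rewrite -ltnS prednK.
have := sqrt_schedule_dist_le eta_ge0 W_ge0 step st'; rewrite prednK // => dist.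
apply: (le_trans (coordB_le_norm2 _ _ i)); apply: (le_trans (hL _ _)).
apply: (le_trans (ler_wpM2l L_ge0 dist)).
by rewrite subnS predn_sub /W /ratio_bound; lra.
Qed.

Hypothesis t_gt0 : (0 < t)%N.

Lemma mofo_mhat_dev : `|mh t ord0 i - g t ord0 i| <= c * (b1 / (1 - b1)).
Proof.
rewrite [mh t ord0 i]mxE.
apply: (@ema_debiased_dev R b1 (fun s => g s ord0 i) (fun s => m s ord0 i) hb1 _
  (fun s => mofo_mS blk f alpha b1 b2 etas theta0 s i)) => //.
- by rewrite mxE.
- exact: mofo_drift_ge0.
- exact: mofo_g_drift.
Qed.

Lemma mofo_vhat_dev : (1 - b2) * vh t ord0 i
  <= (`|g t ord0 i| + c * Num.sqrt (b2 * (1 + b2) / (1 - b2) ^+ 2)) ^+ 2.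
Proof.
rewrite [vh t ord0 i]mxE.
apply: (@ema_debiased_sqr_dev R b2 (fun s => g s ord0 i) (fun s => v s ord0 i) hb2 _
  (fun s => mofo_vS blk f alpha b1 b2 etas theta0 s i)) => //.
- by rewrite mxE.
- exact: mofo_drift_ge0.
- exact: mofo_g_drift.
Qed.

End MoFOSqrtSchedule.

Theorem lemma4 (R : realType) (d B : nat) (blk : 'I_d -> 'I_B)
  (f : 'rV[R]_d -> R) (Lc alpha beta1 beta2 eta : R) (theta0 : 'rV[R]_d) :
  (forall k : 'I_B, exists i : 'I_d, blk i = k) ->
  (forall x : 'rV[R]_d, differentiable f x) ->
  (forall x y : 'rV[R]_d,
     norm2 (gradient f x - gradient f y) <= Lc * norm2 (x - y)) ->
  0 < alpha <= 1 ->
  0 < beta1 < 1 -> 0 < beta2 < 1 ->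
  beta1 < Num.sqrt beta2 ->
  0 < eta ->
  let etas := fun t : nat => eta / Num.sqrt (t%:R) in
  let C := Num.sqrt (d%:R * alpha + B%:R) /
           (Num.sqrt (1 - beta2) * (1 - beta1 / Num.sqrt beta2)) in
  forall (t : nat) (i : 'I_d), (1 <= t)%N ->
    let g := mofo_g blk f alpha beta1 beta2 etas theta0 t ord0 i in
    let mh := mofo_mhat blk f alpha beta1 beta2 etas theta0 t ord0 i in
    let vh := mofo_vhat blk f alpha beta1 beta2 etas theta0 t ord0 i in
    (if vh == 0 then 0 else g * (mh / Num.sqrt vh))
    >= Num.sqrt (1 - beta2) *
       (`|g| - (2 * Num.sqrt 2 * beta1 / (1 - beta1) ^+ 2 + 4 / (1 - beta2))
               * Lc * C * eta / Num.sqrt (t%:R)).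
Proof.
move=> _ _ hL /andP[alpha_gt0 _] hb1 hb2 hq eta_gt0 etas C t i t_gt0; cbv zeta.
have L_ge0 := lipschitz_const_ge0 i hL.
have alpha_ge0 := ltW alpha_gt0; have eta_ge0 := ltW eta_gt0.
set X := Lc * C * eta / Num.sqrt (t%:R).
have X_ge0 : 0 <= X by apply: mofo_scale_ge0.
have -> : forall K, K * Lc * C * eta / Num.sqrt (t%:R) = K * X by move=> K; rewrite /X; ring.
have [hMQ hM] := error_constants_le hb1 hb2 X_ge0.
apply: alignment_lower_bound hMQ hM.
- by case/andP: hb2 => b2_gt0 b2_lt1; rewrite subr_gt0 b2_lt1 lerBlDr lerDl ltW.
- by rewrite mulr_ge0 ?sqrtr_ge0 //; apply: mofo_drift_ge0.
- exact: mofo_mhat_dev.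
- exact: mofo_vhat_ge.
- exact: mofo_vhat_dev.
Qed.
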